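(* Assume $\alpha=\beta\ge2$ and let $(U,V,\Lambda)$ be the similarity profile. Then for every $\tau\ge0$ and all measurable $\rho,\zeta:\mathbb R\to(0,\infty)$ for which $\mathcal I_\Lambda(\rho,\zeta)$ is finite, $$\mathcal I_\Lambda(\rho,\zeta)-e^\tau\mathcal D_{\mathrm{react}}(\rho,\zeta)\le K_2\,e^{-\tau/(\alpha-1)},\qquad K_2:=\frac{\tilde c_\alpha}{k^{1/(\alpha-1)}}\int_{\mathbb R}\Big|\frac{\alpha\Lambda(y)}{U(y)}\Big|^{\alpha/(\alpha-1)}\mathrm dy,$$ with $\tilde c_\alpha=\big(\tfrac{2}{\alpha^2}\big)^{1/(\alpha-1)}\tfrac{\alpha-1}{\alpha}$.
   Context: Fix $d_1,d_2,k>0$, real stoichiometric coefficients $\alpha,\beta\ge1$ and $A_-,A_+>0$. The similarity profile is a triple $(U,V,\Lambda)$ with $U,V\in\mathrm C^2(\mathbb R)$ positive, bounded and bounded away from $0$, $\Lambda:\mathbb R\to\mathbb R$, satisfying $d_1U''+\tfrac y2U'+\alpha\Lambda=0$, $d_2V''+\tfrac y2V'-\beta\Lambda=0$, $U^\alpha=V^\beta$ on $\mathbb R$, and $U(\pm\infty)=A_\pm^\beta$, $V(\pm\infty)=A_\pm^\alpha$. $\Gamma(a,b)=(a-b)(\log a-\log b)$ for $a,b>0$, $\Gamma(0,0)=0$, $\Gamma(0,c)=\Gamma(c,0)=\infty$ for $c>0$. Reactive dissipation $\mathcal D_{\mathrm{react}}(\rho,\zeta)=\int_{\mathbb R}kU^\alpha\,\Gamma(\rho^\alpha,\zeta^\beta)\,\mathrm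 dy$. Mixed term $\mathcal I_\Lambda(\rho,\zeta)=\int_{\mathbb R}\big((1-\rho)\alpha-(1-\zeta)\beta\big)\Lambda\,\mathrm dy$. *)

From HB Require Import structures.
From mathcomp Require Import all_boot all_order all_algebra.
From mathcomp Require Import all_classical all_reals all_analysis.

Set Implicit Arguments.
Unset Strict Implicit.
Unset Printing Implicit Defensive.

Import Order.TTheory GRing.Theory Num.Theory.
Import numFieldNormedType.Exports.

Local Open Scope classical_set_scope.
Local Open Scope ring_scope.

Section Defs.
Variable R : realType.

Definition C2 (f : R -> R) : Prop :=
  (forall x, derivable f x 1) /\
  (forall x, derivable (derive1 f) x 1) /\
  continuous (derive1 (derive1 f)).

Definition pos_bdd_bdd_away (f : R -> R) : Prop :=
  (forall y, 0 < f y) /\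
  (exists M : R, forall y, f y <= M) /\
  (exists m : R, 0 < m /\ forall y, m <= f y).

Definition similarity_profile (d1 d2 alpha beta Am Ap : R)
    (U V Lam : R -> R) : Prop :=
  C2 U /\ C2 V /\ pos_bdd_bdd_away U /\ pos_bdd_bdd_away V /\
  (forall y, d1 * derive1 (derive1 U) y + y / 2 * derive1 U y + alpha * Lam y = 0) /\
  (forall y, d2 * derive1 (derive1 V) y + y / 2 * derive1 V y - beta * Lam y = 0) /\
  (forall y, U y `^ alpha = V y `^ beta) /\
  (U x @[x --> -oo] --> Am `^ beta) /\
  (U x @[x --> +oo] --> Ap `^ beta) /\
  (V x @[x --> -oo] --> Am `^ alpha) /\
  (V x @[x --> +oo] --> Ap `^ alpha).

(* Gamma(a,b) = (a-b)(log a - log b) for a,b>0, Gamma(0,0)=0,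
   Gamma(0,c)=Gamma(c,0)=+oo for c>0 (arguments are meant to be >= 0) *)
Definition Gamma (a b : R) : \bar R :=
  if (a == 0) && (b == 0) then 0%E
  else if (a == 0) || (b == 0) then +oo%E
  else ((a - b) * (ln a - ln b))%:E.

Definition D_react (k alpha beta : R) (U rho zeta : R -> R) : \bar R :=
  (\int[@lebesgue_measure R]_(y in setT)
     ((k * U y `^ alpha)%:E * Gamma (rho y `^ alpha) (zeta y `^ beta)))%E.

Definition I_integrand (alpha beta : R) (Lam rho zeta : R -> R) (y : R) : R :=
  ((1 - rho y) * alpha - (1 - zeta y) * beta) * Lam y.

Definition I_Lambda (alpha beta : R) (Lam rho zeta : R -> R) : \bar R :=
  (\int[@lebesgue_measure R]_(y in setT) (I_integrand alpha beta Lam rho zeta y)%:E)%E.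

Definition c_tilde (alpha : R) : R :=
  (2 / alpha ^+ 2) `^ (1 / (alpha - 1)) * ((alpha - 1) / alpha).

Definition K2 (k alpha : R) (U Lam : R -> R) : \bar R :=
  ((c_tilde alpha / k `^ (1 / (alpha - 1)))%:E *
   \int[@lebesgue_measure R]_(y in setT)
      (`| alpha * Lam y / U y | `^ (alpha / (alpha - 1)))%:E)%E.

End Defs.

From HB Require Import structures.
From mathcomp Require Import all_boot all_order all_algebra.
From mathcomp Require Import all_classical all_reals all_analysis.
From mathcomp Require Import measurable_realfun.
From mathcomp Require Import ring lra.
Import Order.TTheory GRing.Theory Num.Theory.
Import numFieldNormedType.Exports.
Local Open Scope classical_set_scope.
Local Open Scope ring_scope.

(* The inequality is proved pointwise in y and then integrated.  Writing
   x = rho y, z = zeta y, A = |alpha Lambda y| and t = |x - z|: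
   - the mixed integrand equals (z - x) alpha Lambda y <= A t;
   - the reactive integrand obeys Gamma(x^a, z^a) >= a |x - z|^a (a >= 2),
     a consequence of ln x - ln z >= (x - z)/x and of the monotonicity of
     powers;
   - Young's inequality A t <= B t^a + (a-1)/a A^(a/(a-1)) (a B)^(-1/(a-1))
     with B = a e^tau k U^a absorbs A t into e^tau times the reactive
     integrand, the remainder being at most c_tilde / k^(1/(a-1))
     e^(-tau/(a-1)) |a Lambda / U|^(a/(a-1)), i.e. the K2 density.
   Integration is handled by a general lemma: if f is integrable and
   f <= c g + c' h with g, h >= 0 measurable, then
   int f - c int g <= c' int h in the extended reals (int g may be +oo).
   The remaining work is measurability: Lambda is measurable because the
   profile equation expresses it through U', U'' (U is C^2). *)

Section PointwiseBounds.
Variable R : realType.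

Lemma ln_ratio_ge (x y : R) : 0 < y -> y <= x -> (x - y) / x <= ln x - ln y.
Proof.
move=> y0 yx; have x0 : 0 < x := lt_le_trans y0 yx.
have := @le_ln1Dx R (y / x - 1).
rewrite ltrBrDl subrr divr_gt0 // addrC subrK ln_div ?posrE // => /(_ isT).
have -> : (x - y) / x = 1 - y / x by rewrite mulrBl divff ?gt_eqF.
lra.
Qed.

Lemma powR_split (z s a : R) : 0 <= z -> a != 0 -> z `^ a = z `^ s * z `^ (a - s).
Proof. by move=> z0 a0; rewrite -powRD subrKC // (negbTE a0). Qed.

Lemma powR_diff_le_log_gap (a x y : R) : 2 <= a -> 0 < y -> y <= x ->
  (x - y) `^ a <= (x `^ a - y `^ a) * (ln x - ln y).
Proof.
move=> a2 y0 yx; have x0 : 0 < x := lt_le_trans y0 yx.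
have a0 : 0 < a by apply: lt_le_trans a2.
have d0 : 0 <= x - y by rewrite subr_ge0.
have power_gap : (x - y) * x `^ (a - 1) <= x `^ a - y `^ a.
  rewrite mulrBl (mulr_powRB1 (ltW x0) a0) lerD2l lerN2.
  rewrite -(mulr_powRB1 (ltW y0) a0) ler_pM2l //.
  by apply: ge0_ler_powR; rewrite ?nnegrE; lra.
have base_le : (x - y) `^ (a - 2) <= x `^ (a - 2).
  by apply: ge0_ler_powR; rewrite ?nnegrE; lra.
rewrite (@powR_split _ 2) ?gt_eqF // powR_mulrn //.
apply: (@le_trans _ _ (((x - y) * x `^ (a - 1)) * ((x - y) / x))).
  rewrite (@powR_split x 1 (a - 1)) ?powRr1 ?(ltW x0) //; last by rewrite gt_eqF //; lra.
  have -> : a - 1 - 1 = a - 2 by ring.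
  have -> : (x - y) * (x * x `^ (a - 2)) * ((x - y) / x) = (x - y) ^+ 2 * x `^ (a - 2).
    by field; rewrite gt_eqF.
  by apply: ler_wpM2l; rewrite ?sqr_ge0.
apply: ler_pM => //; last exact: ln_ratio_ge.
- by rewrite mulr_ge0 // powR_ge0.
- by rewrite divr_ge0 // ltW.
Qed.

Lemma log_gap_powR_ge (a x y : R) : 2 <= a -> 0 < x -> 0 < y ->
  a * `|x - y| `^ a <= (x `^ a - y `^ a) * (ln (x `^ a) - ln (y `^ a)).
Proof.
move=> a2 x0 y0; have a0 : 0 < a by apply: lt_le_trans a2.
rewrite !ln_powR -mulrBr mulrCA ler_pM2l //.
have [yx|xy] := leP y x.
  by rewrite ger0_norm ?subr_ge0 // powR_diff_le_log_gap.
rewrite ltr0_norm ?subr_lt0 // opprB.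
have -> : (x `^ a - y `^ a) * (ln x - ln y) = (y `^ a - x `^ a) * (ln y - ln x)
  by ring.
by rewrite powR_diff_le_log_gap // ltW.
Qed.

Lemma Gamma_pos (a b : R) : 0 < a -> 0 < b ->
  Gamma a b = ((a - b) * (ln a - ln b))%:E.
Proof. by move=> a0 b0; rewrite /Gamma !gt_eqF. Qed.

Lemma powRV (x r : R) : 0 <= x -> x^-1 `^ r = (x `^ r)^-1.
Proof. by move=> x0; rewrite -powR_inv1 // -powRrM mulN1r powRN. Qed.

(* Young's inequality in the form  A t <= B t^a + C(A, B), i.e. the
   Legendre transform of t |-> B t^a evaluated at A. *)
Lemma young_powR (a A t B : R) : 1 < a -> 0 <= A -> 0 <= t -> 0 < B ->
  A * t <= B * t `^ a +
    (a - 1) / a * A `^ (a / (a - 1)) * (a * B) `^ (- (1 / (a - 1))).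
Proof.
move=> a1 A0 t0 B0.
have a0 : 0 < a := lt_trans ltr01 a1.
have am1 : 0 < a - 1 by rewrite subr_gt0.
set P := a * B; have P0 : 0 < P by rewrite mulr_gt0.
set s := P `^ (1 / a); have s0 : 0 < s by rewrite powR_gt0.
have q0 : 0 < a / (a - 1) by rewrite divr_gt0.
have conj_exp : a^-1 + (a / (a - 1))^-1 = 1 by field; rewrite !gt_eqF.
have := @conjugate_powR R (s * t) (A / s) a (a / (a - 1)).
move=> /(_ (mulr_ge0 (ltW s0) t0) (divr_ge0 A0 (ltW s0)) a0 q0 conj_exp).
have -> : s * t * (A / s) = A * t by field; rewrite gt_eqF.
move=> /le_trans; apply; apply: lerD.
  rewrite powRM ?(ltW s0) // -powRrM mul1r mulVf ?gt_eqF // powRr1 ?(ltW P0) //.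
  by rewrite le_eqVlt; apply/orP; left; apply/eqP; rewrite /P; field; rewrite gt_eqF.
rewrite powRM ?invr_ge0 ?powR_ge0 // powRV ?powR_ge0 // -powRrM -powRN.
have -> : - (1 / a * (a / (a - 1))) = - (1 / (a - 1)) by field; rewrite !gt_eqF.
by rewrite le_eqVlt; apply/orP; left; apply/eqP; field; rewrite !gt_eqF.
Qed.

(* With B = a e^tau k u^a the Young remainder is bounded by the K2 density;
   the constant c_tilde exceeds the exact one by the factor 2^(1/(a-1)). *)
Lemma young_constant_le (a A u k tau : R) : 1 < a -> 0 <= A -> 0 < u -> 0 < k ->
  (a - 1) / a * A `^ (a / (a - 1)) *
    (a * (a * expR tau * k * u `^ a)) `^ (- (1 / (a - 1)))
  <= c_tilde a / k `^ (1 / (a - 1)) * expR (- tau / (a - 1)) *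
     (A / u) `^ (a / (a - 1)).
Proof.
move=> a1 A0 u0 k0.
have a0 : 0 < a := lt_trans ltr01 a1.
have am1 : 0 < a - 1 by rewrite subr_gt0.
set r := 1 / (a - 1); have r0 : 0 <= r by rewrite divr_ge0 // ltW.
have -> : a / (a - 1) = a * r by rewrite mulrA mulr1.
have -> : - tau / (a - 1) = - (tau * r) by rewrite mulNr mulrA mulr1.
have -> : a * (a * expR tau * k * u `^ a) = a ^+ 2 * expR tau * k * u `^ a.
  by rewrite expr2 !mulrA.
rewrite /c_tilde -/r.
have := exprn_gt0 2 a0; move: (a ^+ 2) => a2 a2_0.
have E0 : 0 <= expR tau := expR_ge0 tau.
have denominator_pow : (a2 * expR tau * k * u `^ a) `^ r =
    a2 `^ r * expR (tau * r) * k `^ r * u `^ (a * r).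
  have a2E0 : 0 <= a2 * expR tau by rewrite mulr_ge0 ?(ltW a2_0).
  have a2Ek0 : 0 <= a2 * expR tau * k by rewrite mulr_ge0 ?(ltW k0).
  rewrite (powRM _ a2Ek0 (powR_ge0 _ _)) (powRM _ a2E0 (ltW k0)).
  by rewrite (powRM _ (ltW a2_0) E0) -expRM -powRrM.
have const_pow : (2 / a2) `^ r = 2 `^ r / a2 `^ r.
  by rewrite powRM ?invr_ge0 ?(ltW a2_0) // powRV ?(ltW a2_0).
have ratio_pow : (A / u) `^ (a * r) = A `^ (a * r) / u `^ (a * r).
  by rewrite powRM ?invr_ge0 ?(ltW u0) // powRV ?(ltW u0).
have two_pow : 1 <= 2 `^ r by rewrite -[leLHS](powRr0 2) ler_powR ?ler1n.
rewrite powRN expRN denominator_pow const_pow ratio_pow.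
have := powR_gt0 r a2_0; have := powR_gt0 r k0; have := powR_gt0 (a * r) u0.
have := expR_gt0 (tau * r).
move: (a2 `^ r) (k `^ r) (u `^ (a * r)) (expR (tau * r)) => Pa Pk Pu Pe Pe0 Pu0 Pk0 Pa0.
have -> : 2 `^ r / Pa * ((a - 1) / a) / Pk / Pe * (A `^ (a * r) / Pu) =
    2 `^ r * ((a - 1) / a * A `^ (a * r) / (Pa * Pe * Pk * Pu)).
  by field; rewrite !gt_eqF.
apply: ler_peMl two_pow; apply: divr_ge0; last by rewrite ltW // !mulr_gt0.
by rewrite mulr_ge0 ?powR_ge0 // divr_ge0 // ltW.
Qed.

Lemma mixed_integrand_le (a k tau L u x y : R) :
  2 <= a -> 0 < k -> 0 < u -> 0 < x -> 0 < y ->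
  ((1 - x) * a - (1 - y) * a) * L <=
    expR tau * (k * u `^ a * ((x `^ a - y `^ a) * (ln (x `^ a) - ln (y `^ a)))) +
    c_tilde a / k `^ (1 / (a - 1)) * expR (- tau / (a - 1)) *
      `|a * L / u| `^ (a / (a - 1)).
Proof.
move=> a2 k0 u0 x0 y0.
have a1 : 1 < a by apply: lt_le_trans a2; rewrite ltr1n.
set A : R := `|a * L|; set t : R := `|x - y|.
set B := a * expR tau * k * u `^ a.
have B0 : 0 < B by rewrite !mulr_gt0 ?expR_gt0 ?powR_gt0 // (lt_trans ltr01 a1).
have mixed_le : ((1 - x) * a - (1 - y) * a) * L <= A * t.
  have -> : ((1 - x) * a - (1 - y) * a) * L = (a * L) * (y - x) by ring.
  by rewrite /A /t distrC -normrM ler_norm.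
have react_ge : B * t `^ a <=
    expR tau * (k * u `^ a * ((x `^ a - y `^ a) * (ln (x `^ a) - ln (y `^ a)))).
  have -> : B * t `^ a = expR tau * (k * u `^ a * (a * t `^ a)) by rewrite /B; ring.
  rewrite ler_wpM2l ?expR_ge0 // ler_wpM2l ?mulr_ge0 ?powR_ge0 ?(ltW k0) //.
  exact: log_gap_powR_ge.
have young := @young_powR a A t B a1 (normr_ge0 (a * L)) (normr_ge0 (x - y)) B0.
have const := @young_constant_le a A u k tau a1 (normr_ge0 (a * L)) u0 k0.
have -> : `|a * L / u| = A / u by rewrite normrM (@gtr0_norm _ u^-1) ?invr_gt0.
lra.
Qed.
End PointwiseBounds.

Lemma lee_subl_scaled (R : realType) (x y z : \bar R) (c : R) :
  x \is a fin_num -> 0 < c -> (0 <= y)%E ->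
  (x <= c%:E * y + z)%E -> (x - c%:E * y <= z)%E.
Proof.
move=> xfin c0; case: y => [r| |] // _; first by rewrite leeBlDl // -EFinM.
by rewrite mulr_infty gtr0_sg // mul1e => _; case: x xfin => //= r _; rewrite leNye.
Qed.

Section IntegralComparison.
Local Open Scope ereal_scope.
Context d (T : measurableType d) (R : realType) (mu : {measure set T -> \bar R}).
Variables (D : set T) (mD : measurable D).

Lemma integrable_le_ge0_integral (f g : T -> \bar R) :
  mu.-integrable D f -> measurable_fun D g ->
  (forall x, D x -> 0 <= g x) -> (forall x, D x -> f x <= g x) ->
  \int[mu]_(x in D) f x <= \int[mu]_(x in D) g x.
Proof.
move=> intf mg g0 fg; rewrite integralE.
apply: (@le_trans _ _ (\int[mu]_(x in D) f^\+ x)).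
  rewrite -[leRHS]sube0; apply: leeB => //.
  by apply: integral_ge0 => x _; exact: funeneg_ge0.
apply: ge0_le_integral => //.
- exact: measurable_funepos (measurable_int mu intf).
- by move=> x Dx; rewrite funeposE ge_max fg // g0.
Qed.

Lemma integral_sub_scaled_le (f g h : T -> R) (c c' : R) :
  (0 < c)%R -> (0 <= c')%R ->
  mu.-integrable D (fun x => (f x)%:E) -> measurable_fun D g -> measurable_fun D h ->
  (forall x, D x -> 0 <= g x)%R -> (forall x, D x -> 0 <= h x)%R ->
  (forall x, D x -> f x <= c * g x + c' * h x)%R ->
  \int[mu]_(x in D) (f x)%:E - c%:E * \int[mu]_(x in D) (g x)%:E
    <= c'%:E * \int[mu]_(x in D) (h x)%:E.
Proof.
move=> c0 c'0 intf mg mh g0 h0 fgh.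
apply: (@lee_subl_scaled _ _ _ _ c) => //; first exact: integrable_fin_num.
  by apply: integral_ge0 => x Dx; rewrite lee_fin g0.
have c0' : (0 <= c)%R := ltW c0.
have cg0 x : D x -> 0 <= c%:E * (g x)%:E.
  by move=> Dx; rewrite -EFinM lee_fin mulr_ge0 ?g0.
have ch0 x : D x -> 0 <= c'%:E * (h x)%:E.
  by move=> Dx; rewrite -EFinM lee_fin mulr_ge0 ?h0.
have mcg : measurable_fun D (fun x => (c * g x)%:E).
  by apply/measurable_EFinP; exact: measurable_funM.
have mch : measurable_fun D (fun x => (c' * h x)%:E).
  by apply/measurable_EFinP; exact: measurable_funM.
rewrite -!ge0_integralZl_EFin //; try exact/measurable_EFinP.
rewrite -ge0_integralD //; apply: integrable_le_ge0_integral => //.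
- exact: emeasurable_funD.
- by move=> x Dx; rewrite adde_ge0 ?cg0 ?ch0.
Qed.

End IntegralComparison.

Section ProfileDensities.
Context {R : realType}.

Lemma log_gap_ge0 (p q : R) : 0 < p -> 0 < q -> 0 <= (p - q) * (ln p - ln q).
Proof.
move=> p0 q0; have [qp|pq] := leP q p.
  by rewrite mulr_ge0 // subr_ge0 // ler_ln.
by rewrite mulr_le0 // subr_le0 ?ler_ln // ltW.
Qed.

Definition react_density (k a : R) (U rho zeta : R -> R) (y : R) : R :=
  k * U y `^ a *
  ((rho y `^ a - zeta y `^ a) * (ln (rho y `^ a) - ln (zeta y `^ a))).

Definition K2_density (a : R) (U Lam : R -> R) (y : R) : R :=
  `|a * Lam y / U y| `^ (a / (a - 1)).

Lemma D_react_density (k a : R) (U rho zeta : R -> R) :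
  (forall y, 0 < rho y) -> (forall y, 0 < zeta y) ->
  D_react k a a U rho zeta =
  (\int[@lebesgue_measure R]_(y in setT) (react_density k a U rho zeta y)%:E)%E.
Proof.
move=> rho0 zeta0; apply: eq_integral => y _.
by rewrite Gamma_pos ?powR_gt0 // -EFinM mulrA.
Qed.

Lemma react_density_ge0 (k a : R) (U rho zeta : R -> R) (y : R) :
  0 < k -> 0 < rho y -> 0 < zeta y -> 0 <= react_density k a U rho zeta y.
Proof.
move=> k0 r0 z0; rewrite /react_density mulr_ge0 ?log_gap_ge0 ?powR_gt0 //.
by rewrite mulr_ge0 ?powR_ge0 // ltW.
Qed.

Lemma react_density_measurable (k a : R) (U rho zeta : R -> R) :
  measurable_fun setT U -> measurable_fun setT rho -> measurable_fun setT zeta ->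
  measurable_fun setT (react_density k a U rho zeta).
Proof.
move=> mU mrho mzeta.
have mpow (f : R -> R) : measurable_fun setT f -> measurable_fun setT (fun y => f y `^ a).
  by move=> mf; apply: (measurableT_comp (measurable_powR a) mf).
have mlnpow (f : R -> R) : measurable_fun setT f ->
    measurable_fun setT (fun y => ln (f y `^ a)).
  by move=> mf; apply: measurableT_comp (@measurable_ln R) _; exact: mpow.
apply: measurable_funM; first by apply: measurable_funM => //; exact: mpow.
by apply: measurable_funM; apply: measurable_funB; auto.
Qed.

Lemma K2_density_measurable (a : R) (U Lam : R -> R) :
  continuous U -> (forall y, 0 < U y) -> measurable_fun setT Lam ->
  measurable_fun setT (K2_density a U Lam).
Proof.
move=> cU Upos mLam.
have mUinv : measurable_fun setT (fun y => (U y)^-1).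
  apply: continuous_measurable_fun => y.
  by apply: continuousV; [rewrite gt_eqF | exact: cU].
apply: measurableT_comp (measurable_powR _) _.
apply: measurableT_comp (@normr_measurable _ _) _.
by apply: measurable_funM => //; exact: measurable_funM.
Qed.

Lemma c_tilde_ge0 (a : R) : 1 < a -> 0 <= c_tilde a.
Proof.
move=> a1; rewrite /c_tilde mulr_ge0 ?powR_ge0 // divr_ge0 ?subr_ge0 ?ltW //.
exact: lt_trans ltr01 a1.
Qed.

Lemma K2_expR (k a tau : R) (U Lam : R -> R) :
  (K2 k a U Lam * (expR (- tau / (a - 1)))%:E =
   (c_tilde a / k `^ (1 / (a - 1)) * expR (- tau / (a - 1)))%:E *
   \int[@lebesgue_measure R]_(y in setT) (K2_density a U Lam y)%:E)%E.
Proof. by rewrite /K2 muleAC -EFinM. Qed.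

Lemma C2_continuous (f : R -> R) : C2 f ->
  [/\ continuous f, continuous (derive1 f) & continuous (derive1 (derive1 f))].
Proof.
case=> df [ddf cf2]; split => // x.
- by apply: differentiable_continuous; apply/derivable1_diffP; exact: df.
- by apply: differentiable_continuous; apply/derivable1_diffP; exact: ddf.
Qed.

(* The profile equation for U determines Lambda, which is therefore
   measurable. *)
Lemma profile_Lambda_measurable (d1 a : R) (U Lam : R -> R) :
  a != 0 -> C2 U ->
  (forall y, d1 * derive1 (derive1 U) y + y / 2 * derive1 U y + a * Lam y = 0) ->
  measurable_fun setT Lam.
Proof.
move=> a0 /C2_continuous[_ cU1 cU2] ode.
have -> : Lam = fun y => - (d1 * derive1 (derive1 U) y + y / 2 * derive1 U y) / a.
  apply/funext => y; apply: (mulfI a0).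
  by rewrite mulrCA divff // mulr1; have := ode y; lra.
apply: measurable_funM => //; apply: measurable_funN; apply: measurable_funD.
  by apply: measurable_funM => //; exact: continuous_measurable_fun.
apply: measurable_funM; first exact: mulrr_measurable.
exact: continuous_measurable_fun.
Qed.

End ProfileDensities.

Theorem mainTheorem9 (R : realType) (d1 d2 k alpha beta Am Ap : R)
    (U V Lam : R -> R) :
  0 < d1 -> 0 < d2 -> 0 < k -> 0 < Am -> 0 < Ap ->
  alpha = beta -> 2 <= alpha ->
  similarity_profile d1 d2 alpha beta Am Ap U V Lam ->
  forall (tau : R), 0 <= tau ->
  forall (rho zeta : R -> R),
    measurable_fun setT rho -> measurable_fun setT zeta ->
    (forall y, 0 < rho y) -> (forall y, 0 < zeta y) ->
    (@lebesgue_measure R).-integrable setT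
       (fun y => (I_integrand alpha beta Lam rho zeta y)%:E) ->
    (I_Lambda alpha beta Lam rho zeta
       - (expR tau)%:E * D_react k alpha beta U rho zeta
     <= K2 k alpha U Lam * (expR (- tau / (alpha - 1)))%:E)%E.
Proof.
move=> _ _ k0 _ _ <- a2 [C2U [_ [[Upos _] [_ [odeU _]]]]] tau _ rho zeta
  mrho mzeta rho0 zeta0 Iint.
have a1 : 1 < alpha by apply: lt_le_trans a2; rewrite ltr1n.
case/C2_continuous: (C2U) => cU _ _.
have mU := continuous_measurable_fun cU.
have mLam := @profile_Lambda_measurable _ d1 alpha U Lam
  (lt0r_neq0 (lt_trans ltr01 a1)) C2U odeU.
rewrite D_react_density // K2_expR.
apply: integral_sub_scaled_le => //.
- exact: expR_gt0.
- by rewrite mulr_ge0 ?expR_ge0 ?divr_ge0 ?powR_ge0 ?c_tilde_ge0.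
- exact: react_density_measurable.
- exact: K2_density_measurable.
- by move=> y _; exact: react_density_ge0.
- by move=> y _; exact: powR_ge0.
- by move=> y _; exact: mixed_integrand_le.
Qed.
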